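(* Assume that $\mathfrak{c}$ is regular. Let $X$, $Y$ and $Y_\alpha$ ($\alpha\in Y$) be Polish spaces and let $\{f_\alpha:\alpha\in Y\}$ be functions $f_\alpha:X\to Y_\alpha$ such that for all distinct $\alpha,\beta\in Y$: (i) for every $y\in Y_\alpha$, $|f_\alpha^{-1}[\{y\}]|=\mathfrak{c}$; (ii) for every $y\in Y_\alpha$ and $y'\in Y_\beta$, $|f_\alpha^{-1}[\{y\}]\cap f_\beta^{-1}[\{y'\}]|<\mathfrak{c}$. Then there exist $A\subseteq X$ and disjoint Bernstein sets $F,G\subseteq Y$ with $Y=F\cup G$ such that $F=\{\alpha\in Y: f_\alpha[A]=Y_\alpha\}$ and $G=\{\alpha\in Y: f_\alpha[A]$ is a Bernstein set in $Y_\alpha\}$.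
   Context: A subset $S$ of a Polish space $Z$ is a Bernstein set in $Z$ if for every nonempty perfect set $P\subseteq Z$ we have $S\cap P\neq\emptyset$ and $(Z\setminus S)\cap P\neq\emptyset$. *)

From HB Require Import structures.
From mathcomp Require Import all_boot all_order all_algebra.
From mathcomp Require Import all_classical all_reals all_analysis.
Set Implicit Arguments. Unset Strict Implicit. Unset Printing Implicit Defensive.
Import Order.TTheory GRing.Theory Num.Theory.
Local Open Scope classical_set_scope.

(* The continuum c is the cardinality of a real field R : realType. *)

Definition card_is_c (R : realType) (T : Type) (S : set T) : Prop :=
  card_eq S [set: R].

Definition card_lt_c (R : realType) (T : Type) (S : set T) : Prop :=
  ~ card_le [set: R] S.

(* c is regular: a union of fewer than c sets, each of size < c, has size < c
   (index sets and members taken, w.l.o.g., inside a set of size c, namely R). *)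
Definition continuum_regular (R : realType) : Prop :=
  forall (I : set R) (F : R -> set R),
    card_lt_c R I -> (forall i, I i -> card_lt_c R (F i)) ->
    card_lt_c R (\bigcup_(i in I) F i).

(* Polish space: a separable complete metric space (metric = Hausdorff
   complete pseudometric). *)
Definition separable (T : topologicalType) : Prop :=
  exists D : set T, countable D /\ dense D.

Definition polish (R : realType) (T : completePseudoMetricType R) : Prop :=
  hausdorff_space T /\ separable T.

Definition bernstein (Z : topologicalType) (S : set Z) : Prop :=
  forall P : set Z, perfect_set P -> P !=set0 ->
    (S `&` P !=set0) /\ (~` S `&` P !=set0).

(* Under regularity of c, fewer than c sets of size < c never cover a set of
   size c, so a recursion of length c can meet c requirements one at a time.
   A Polish space has only c points and c closed sets, and each of its nonempty
   perfect subsets has size c (Cantor scheme).  So Y splits into complementary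
   Bernstein sets F and G, and A is built by such a recursion: for a in F and y
   in Y_a, add a point of the fibre of y avoiding the values forbidden so far,
   which exists because by (i) and (ii) the fibre has size c while its
   intersections with the earlier fibres are small; for a in G and a perfect P
   in Y_a, forbid forever a fresh value z in P to f_a and add a point that f_a
   maps into P \ {z}.  If some Y_a has no perfect subset then it is countable,
   so (i) and (ii) force Y to be a single point, and every set is Bernstein. *)

From HB Require Import structures.
From mathcomp Require Import all_boot all_order all_algebra.
From mathcomp Require Import all_classical all_reals all_analysis wochoice.
From mathcomp Require Import lra.
From Stdlib Require Import Inverse_Image.
Import Order.TTheory GRing.Theory Num.Theory numFieldNormedType.Exports.
Local Open Scope classical_set_scope.
Local Open Scope card_scope.
Local Open Scope ring_scope.

Section small_sets.
Context {R : realType}.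
Local Notation small := (card_lt_c R).

Lemma card_le_realT_inj {T} (B : set T) :
  [set: R] #<= B -> exists f : R -> T, injective f /\ (forall r, B (f r)).
Proof.
elim/Ppointed: T B => T B.
  have -> : B = set0 by apply/seteqP; split => x; case: (no x).
  by move=> /card_le0P; rewrite -subset0 => /(_ 0 I).
move=> /pcard_leP [f]; exists f; split; last by move=> r; apply: (@funS _ _ _ _ f).
by move=> x y; apply: (@inj _ _ _ f); rewrite ?in_setE.
Qed.

Lemma card_le_inj {T U} {A : set T} {B : set U} {f : T -> U} :
  {in A &, injective f} -> f @` A `<=` B -> A #<= B.
Proof.
move=> f_inj fAB; apply: (@card_le_trans _ _ _ (f @` A)); last exact: subset_card_le.
by have := card_esym (inj_card_eq f_inj); rewrite card_eq_le => /andP[].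
Qed.

Lemma small_subset {T} {A B : set T} : A `<=` B -> small B -> small A.
Proof. by move=> AB sB RA; apply/sB/(card_le_trans RA)/subset_card_le. Qed.

Lemma small_card_le {T U} {A : set T} {B : set U} : A #<= B -> small B -> small A.
Proof. by move=> AB sB RA; exact/sB/(card_le_trans RA AB). Qed.

Lemma small_image {T U} (f : T -> U) {A : set T} : small A -> small (f @` A).
Proof. exact/small_card_le/card_image_le. Qed.

Lemma realT_uncountable : ~ countable [set: R].
Proof.
move=> cR; have c01 : countable (`[0, 1]%classic : set R).
  exact: sub_countable (subset_card_le (@subsetT _ _)) cR.
have := countable_lebesgue_measure0 c01.
rewrite lebesgue_measure_itv /= lte_fin ltr01 oppr0 adde0.
by move=> /eqP; rewrite eqe oner_eq0.
Qed.

Lemma countable_small {T} {A : set T} : countable A -> small A.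
Proof. by move=> cA RA; apply: realT_uncountable; exact: card_le_trans RA cA. Qed.

Lemma card_is_c_notsmall {T} {A : set T} : card_is_c R A -> ~ small A.
Proof. by rewrite /card_is_c card_eq_sym card_eq_le => /andP[RA _]; apply. Qed.

Lemma countable_card_le_realT {T} {A : set T} : countable A -> A #<= [set: R].
Proof.
move=> /card_le_trans; apply; apply: (card_le_inj (f := fun n : nat => n%:R)) => //.
by move=> m n _ _ /eqP; rewrite eqr_nat => /eqP.
Qed.

Lemma notsmall_nonempty {T} {P : set T} : ~ small P -> P !=set0.
Proof.
move=> bP; apply/set0P/negP => /eqP P0; apply: bP; rewrite P0.
exact/countable_small/countable0.
Qed.

Hypothesis continuum_reg : continuum_regular R.

Lemma small_bigcup {I T} {D : set I} {F : I -> set T} :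
  D #<= [set: R] -> small D -> (forall i, D i -> small (F i)) ->
  small (\bigcup_(i in D) F i).
Proof.
move=> DR sD sF /card_le_realT_inj [h [h_inj hF]].
have /pcard_leP[e] := DR.
have e_inj : {in D &, injective e} by move=> i j Di Dj; apply: (@inj _ _ _ e).
(* Regularity applies once the indices are moved into [R] along [e] and the
   members are pulled back into [R] along [h]. *)
pose G (r : R) : set R := [set s | exists2 i, D i /\ e i = r & F i (h s)].
have sG r : (e @` D) r -> small (G r).
  move=> [i Di <-]; apply: (small_card_le _ (sF i Di)).
  apply: (card_le_inj (f := h)) => [x y _ _|_ [s [j [Dj eji] Fjs] <-]]; first exact: h_inj.
  by rewrite (e_inj i j) ?in_setE.
apply: (continuum_reg _ _ (small_image e sD) sG).
apply: (card_le_inj (f := id)) => [x y _ _ //|_ [s _ <-]].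
by have [i Di Fi] := hF s; exists (e i); exists i.
Qed.

Lemma small_setU {T} {A B : set T} : small A -> small B -> small (A `|` B).
Proof.
have I2_countable : countable `I_2 by exact/finite_set_countable/finite_II.
move=> sA sB; rewrite -bigcup2inE; apply: small_bigcup; last by move=> [|[|]].
- exact: countable_card_le_realT I2_countable.
- exact: countable_small I2_countable.
Qed.

Lemma notsmall_setD {T} {P S : set T} : ~ small P -> small S -> ~ small (P `\` S).
Proof.
move=> bP sS sD.
have PS : P `<=` (P `\` S) `|` S by move=> x Px; have [|] := pselect (S x); [right | left].
exact: bP (small_subset PS (small_setU sD sS)).
Qed.

Lemma notsmall_setD_two {T} {P S : set T} : ~ small P -> small S ->
  exists p q, [/\ (P `\` S) p, (P `\` S) q & p <> q].
Proof.
move=> bP sS; have [p PSp] := notsmall_nonempty (notsmall_setD bP sS).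
have sSp : small (S `|` [set p]) by apply/small_setU/countable_small/countable1.
have [q [Pq /not_orP[Sq qp]]] := notsmall_nonempty (notsmall_setD bP sSp).
by exists p, q; split => // pq; apply: qp.
Qed.

End small_sets.

Lemma well_order_wf_strict (T : eqType) (le : rel T) :
  well_order le -> well_founded (fun x y => le x y /\ x <> y).
Proof.
move=> wo a; apply: contrapT => na.
have [|m [[/asboolPn mN m_min] _]] :=
  wo [pred z | ~~ `[< Acc (fun x y => le x y /\ x <> y) z >]].
  by exists a; apply/asboolPn.
apply: mN; constructor => y [ym ny]; apply: contrapT => ay; apply: ny.
by apply: (wo_chain_antisymmetric (withinW wo)) => //; rewrite ym m_min //; apply/asboolPn.
Qed.

Section continuum_well_order.
Context {R : realType}.
Local Notation small := (card_lt_c R).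

(* Well-order R and cut it at the least point with a segment of size c: the
   segments below points of that initial part W are small, and W has size c. *)
Lemma realT_well_order_small_segments :
  exists (lt : R -> R -> Prop) (W : set R),
    [/\ well_founded lt, (forall x y, x <> y -> lt x y \/ lt y x),
        (forall w, W w -> small [set v | lt v w]) & [set: R] #<= W].
Proof.
have [le wo] := well_ordering_principle R.
have le_total : total le by move=> x y; apply: (wo_chainW (withinW wo)).
pose lt x y := le x y /\ x <> y.
have lt_total x y : x <> y -> lt x y \/ lt y x.
  by move=> xy; case/orP: (le_total x y) => ?; [left | right]; split => // /esym.
have [[w Sw]|nS] := pselect (exists w, [set: R] #<= [set v | lt v w]); last first.
  exists lt, setT; split; [exact: well_order_wf_strict | exact: lt_total | | exact: card_lexx].
  by move=> w _ Sw; apply: nS; exists w.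
have [|m [[/asboolP Sm m_min] _]] := wo [pred w | `[< [set: R] #<= [set v | lt v w] >]].
  by exists w; apply/asboolP.
exists lt, [set v | lt v m]; split; [exact: well_order_wf_strict | exact: lt_total | | exact: Sm].
move=> v [vm nvm] Sv; apply/nvm/(wo_chain_antisymmetric (withinW wo)) => //.
by rewrite vm m_min //; apply/asboolP.
Qed.

End continuum_well_order.

Lemma wf_recursive_choice {T : Type} {Out : pointedType} {lt : T -> T -> Prop}
    (good : T -> set Out -> Out -> Prop) : well_founded lt ->
  (forall t (g : T -> Out), exists o, good t (g @` [set s | lt s t]) o) ->
  exists g : T -> Out, forall t, good t (g @` [set s | lt s t]) (g t).
Proof.
move=> wf good_ex.
pose past t (rec : forall s, lt s t -> Out) := [set o | exists s (p : lt s t), rec s p = o].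
pose g := Fix wf (fun=> Out) (fun t rec => @xget Out point (good t (past t rec))).
have gE t : g t = @xget Out point (good t (g @` [set s | lt s t])).
  rewrite /g Fix_eq => [|u f f' ff']; last first.
    by congr (xget _ (good _ _)); apply/seteqP; split => o [s [p <-]]; exists s, p; rewrite ff'.
  congr (xget _ (good _ _)); apply/seteqP; split => o.
    by case=> s [p <-]; exists s.
  by case=> s p <-; exists s, p.
by exists g => t; rewrite [in X in good _ _ X]gE; apply: xgetPex; exact: good_ex.
Qed.

(* The requirements [Tk] are met one at a time along a well-order of type c,
   so each step only has to cope with fewer than c earlier choices. *)
Lemma transfinite_construction {R : realType} {Tk : Type} {Out : pointedType}
    (enc : Tk -> R) (good : Tk -> set Out -> Out -> Prop) : injective enc ->
  (forall t (S : set Out), card_lt_c R S -> S #<= [set: R] -> exists o, good t S o) ->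
  exists (g : Tk -> Out) (prec : Tk -> Tk -> Prop),
    (forall s t, s <> t -> prec s t \/ prec t s) /\
    (forall t, good t (g @` [set s | prec s t]) (g t)).
Proof.
move=> enc_inj hgood.
have [lt [W [lt_wf lt_total small_seg /card_le_realT_inj [h [h_inj hW]]]]] :=
  @realT_well_order_small_segments R.
pose code t := h (enc t).
have code_inj : injective code by move=> s t /h_inj /enc_inj.
pose prec s t := lt (code s) (code t).
have [|g gG] := wf_recursive_choice good (wf_inverse_image _ _ _ code lt_wf).
  move=> t g; have seg_le : [set s | prec s t] #<= [set v | lt v (code t)].
    by apply: (@card_le_inj _ _ _ _ code) => [x y _ _ /code_inj|_ [s ? <-]].
  apply: hgood; first exact: small_image _ (small_card_le seg_le (small_seg _ (hW _))).
  apply: card_le_trans (card_image_le _ _) _.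
  by apply: (@card_le_inj _ _ _ _ enc) => [x y _ _ /enc_inj|].
by exists g, prec; split => // s t st; apply: lt_total => /code_inj.
Qed.

Section cantor_scheme.
Variables (R : realType) (T : pseudoMetricType R) (P : set T).
Hypotheses (T_hausdorff : hausdorff_space T) (P_dense_in_itself : P `<=` limit_point P).

(* [q = (x, y, s)] encodes two children [ball x s] and [ball y s] of [ball c r],
   centred in [P], whose doubles are disjoint and still inside [ball c r]. *)
Definition cantor_split (c : T) (r eps : R) (q : T * T * R) : Prop :=
  [/\ P q.1.1, P q.1.2, 0 < q.2 & q.2 <= eps] /\
  [/\ ball q.1.1 (2 * q.2) `<=` ball c r, ball q.1.2 (2 * q.2) `<=` ball c r &
      ball q.1.1 (2 * q.2) `&` ball q.1.2 (2 * q.2) = set0].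

Lemma cantor_split_exists {c : T} {r eps : R} : P c -> 0 < r -> 0 < eps ->
  exists q, cantor_split c r eps q.
Proof.
move=> Pc r0 e0; have r2 : 0 < r / 2 by lra.
have [y [yc Py cy]] := P_dense_in_itself c Pc _ (nbhsx_ballx c _ r2).
have [[ra rb] /= /eqP sep] : exists r : {posnum R} * {posnum R},
    ball c r.1%:num `&` ball y r.2%:num == set0.
  by move: T_hausdorff; rewrite ball_hausdorff; apply; rewrite eq_sym.
pose m := Num.min (Num.min ra%:num rb%:num) (Num.min (r / 4) eps).
have m0 : 0 < m by rewrite /m !lt_min; apply/andP; split; apply/andP; split => //; lra.
have [mra mrb mr me] : [/\ m <= ra%:num, m <= rb%:num, m <= r / 4 & m <= eps].
  by rewrite /m !ge_min !lexx !orbT.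
exists (c, y, m / 2); split; split => //=; [lra | lra | apply: le_ball; lra | |].
- move=> z yz; apply: (@le_ball _ _ _ (r / 2 + 2 * (m / 2))); first lra.
  exact: ball_triangle cy yz.
- apply/seteqP; split => // z [cz yz]; rewrite -sep.
  by split; [apply: le_ball cz | apply: le_ball yz]; lra.
Qed.

Definition split_of (c : T) (r eps : R) : T * T * R := xget (c, c, r) (cantor_split c r eps).

Lemma split_ofP {c : T} {r eps : R} : P c -> 0 < r -> 0 < eps ->
  cantor_split c r eps (split_of c r eps).
Proof. by move=> Pc r0 e0; apply: xgetPex; exact: cantor_split_exists. Qed.

Variable x0 : T.

(* A centre and a radius: the branch [b] picks a child at each level, and the
   bound [1 / (n + 2)] in the split forces the radii to 0. *)
Fixpoint cantor_node (b : nat -> bool) (n : nat) : T * R :=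
  if n is n'.+1 then
    let c := cantor_node b n' in
    let q := split_of c.1 c.2 n'.+2%:R^-1 in (if b n' then q.1.2 else q.1.1, q.2)
  else (x0, 1).

Lemma cantor_node_prefix n b b' : (forall k, (k < n)%N -> b k = b' k) ->
  cantor_node b n = cantor_node b' n.
Proof.
elim: n => //= n IH bb'; rewrite IH => [|k kn]; last exact/bb'/ltnW.
by rewrite bb'.
Qed.

Hypothesis P_x0 : P x0.

Lemma cantor_node_split b n :
  [/\ P (cantor_node b n).1, 0 < (cantor_node b n).2, (cantor_node b n).2 <= n.+1%:R^-1 &
      cantor_split (cantor_node b n).1 (cantor_node b n).2 n.+2%:R^-1
                   (split_of (cantor_node b n).1 (cantor_node b n).2 n.+2%:R^-1)].
Proof.
have eps0 k : 0 < k.+2%:R^-1 :> R by rewrite invr_gt0 ltr0n.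
suff [Pc r0 rn] : [/\ P (cantor_node b n).1, 0 < (cantor_node b n).2 &
                      (cantor_node b n).2 <= n.+1%:R^-1].
  by split => //; apply: split_ofP.
elim: n => [|n [Pc r0 _]] /=; first by rewrite invr1.
have [[Px Py s0 sn] _] := split_ofP Pc r0 (eps0 n).
by case: (b n).
Qed.

Lemma cantor_node_sub b n m : (n <= m)%N ->
  ball (cantor_node b m).1 (cantor_node b m).2 `<=` ball (cantor_node b n).1 (cantor_node b n).2.
Proof.
elim: m => [|m IH]; first by rewrite leqn0 => /eqP ->.
rewrite leq_eqVlt => /orP[/eqP -> //|]; rewrite ltnS => /IH; apply: subset_trans.
have [_ _ _ [[_ _ s0 _] [sub_x sub_y _]]] := cantor_node_split b m.
by move=> z /=; case: (b m) => zb; [apply: sub_y | apply: sub_x]; apply: le_ball zb; lra.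
Qed.

End cantor_scheme.

Section cantor_point.
Variables (R : realType) (T : completePseudoMetricType R) (P : set T) (x0 : T).
Hypotheses (T_hausdorff : hausdorff_space T) (P_closed : closed P)
  (P_dense_in_itself : P `<=` limit_point P) (P_x0 : P x0).

Let node := @cantor_node R T P x0.
Let node_split := @cantor_node_split R T P T_hausdorff P_dense_in_itself x0 P_x0.
Let node_sub := @cantor_node_sub R T P T_hausdorff P_dense_in_itself x0 P_x0.

Lemma cantor_node_center_in b {n m} : (n <= m)%N -> ball (node b n).1 (node b n).2 (node b m).1.
Proof.
move=> nm; have [_ r0 _ _] := node_split b m.
exact: node_sub nm _ (ballxx _ r0).
Qed.

Definition cantor_point b := lim ((fun n => (node b n).1) @ \oo).

Lemma cantor_point_cvg b : (fun n => (node b n).1) @ \oo --> cantor_point b.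
Proof.
suff : cvg ((fun n => (node b n).1) @ \oo) by [].
apply/cauchy_cvgP; apply: cauchy_exP => e e0.
have [k] := ltr_add_invr e0; rewrite add0r => ke.
exists (node b k).1, k => // m /= km; have [_ _ rk _] := node_split b k.
apply: (le_ball _ (cantor_node_center_in b km)); exact: le_trans rk (ltW ke).
Qed.

Lemma cantor_point_ball b n : ball (node b n).1 (2 * (node b n).2) (cantor_point b).
Proof.
have [_ r0 _ _] := node_split b n.
have [N _ hN] := cvg_ball (@cantor_point_cvg b) r0.
have near_m : ball (cantor_point b) (node b n).2 (node b (maxn n N)).1.
  by apply: hN; rewrite /= leq_maxr.
have := ball_triangle (cantor_node_center_in b (leq_maxl n N)) (ball_sym near_m).
by apply: le_ball; lra.
Qed.

Lemma cantor_point_in b : P (cantor_point b).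
Proof.
apply: (closed_cvg _ P_closed) (@cantor_point_cvg b).
by apply: nearW => m; have [] := node_split b m.
Qed.

(* Two branches first differ at some [n]; their points then lie in the
   disjoint double balls of the two children of the common node [n]. *)
Lemma cantor_point_inj : injective cantor_point.
Proof.
move=> b b' bb'; apply/funext => k; apply/eqP; apply: contraT => bk.
case: (ex_minnP (ex_intro (fun k => b k != b' k) k bk)) => n bn n_min.
have pre : node b n = node b' n.
  apply: cantor_node_prefix => i ni; apply/eqP; apply: contraT => /n_min.
  by rewrite leqNgt ni.
have := cantor_point_ball b n.+1; have := cantor_point_ball b' n.+1.
rewrite /node /= -/(node b n) -/(node b' n) pre bb'.
have [_ _ _ [_ [_ _ disj]]] := node_split b' n.
move: bn; case: (b n); case: (b' n) => //= _ p1 p2.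
  by suff : set0 (cantor_point b') by []; rewrite -disj.
by suff : set0 (cantor_point b') by []; rewrite -disj.
Qed.

End cantor_point.

Lemma dense_in_itself_cantor_inj {R : realType} {T : completePseudoMetricType R} {P : set T} :
  hausdorff_space T -> closed P -> P `<=` limit_point P -> P !=set0 ->
  exists g : (nat -> bool) -> T, injective g /\ (forall b, P (g b)).
Proof.
move=> T_hausdorff P_closed P_dense [x0 P_x0]; exists (@cantor_point R T P x0).
by split; [apply: cantor_point_inj | apply: cantor_point_in].
Qed.

Lemma realT_dense_in_itself (R : realType) : [set: R] `<=` limit_point [set: R].
Proof.
move=> x _ U /nbhs_ballP [e /= e0 sU]; exists (x + e / 2); split => //.
  by apply/negP => /eqP; lra.
apply: sU; rewrite /ball /= opprD addrA subrr add0r normrN ger0_norm; lra.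
Qed.

Definition rat_cuts {R : realType} (x : R) : nat -> bool :=
  fun n => `[< ratr (odflt 0 (unpickle n)) < x >].

Lemma rat_cuts_inj (R : realType) : injective (@rat_cuts R).
Proof.
suff cuts_neq (x y : R) : x < y -> rat_cuts x <> rat_cuts y.
  by move=> x y xy; case: (ltgtP x y) => // [/cuts_neq|/cuts_neq /(_ (esym xy))].
move=> xy cxy; have [q] := rat_in_itvoo xy; rewrite in_itv /= => /andP[xq qy].
have := congr1 (fun f => f (pickle q)) cxy; rewrite /rat_cuts pickleK /=.
have -> : `[< ratr q < x >] = false by apply/asboolP; lra.
by have -> : `[< ratr q < y >] = true by apply/asboolP.
Qed.

Lemma bool_fun_realT_inj (R : realType) (K : countType) :
  exists h : (K -> bool) -> R, injective h.
Proof.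
have [f [f_inj _]] := dense_in_itself_cantor_inj (@Rhausdorff R) closedT
  (@realT_dense_in_itself R) (ex_intro _ 0 I).
pose seq_of (c : K -> bool) (n : nat) := if unpickle n is Some k then c k else false.
exists (f \o seq_of) => c1 c2 /f_inj c12; apply/funext => k.
by have := congr1 (fun c => c (pickle k)) c12; rewrite /seq_of /= pickleK.
Qed.

Lemma perfect_set_notsmall {R : realType} {T : completePseudoMetricType R} {P : set T} :
  hausdorff_space T -> perfect_set P -> P !=set0 -> ~ card_lt_c R P.
Proof.
move=> T_hausdorff [P_closed P_lim] P0.
have [|g [g_inj gP]] := dense_in_itself_cantor_inj T_hausdorff P_closed _ P0.
  by rewrite P_lim.
apply; apply: (@card_le_inj _ _ _ _ (g \o @rat_cuts R)) => [x y _ _ /g_inj /rat_cuts_inj //|].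
by move=> _ [x _ <-]; apply: gP.
Qed.

Lemma separable_dense_seq {R : realType} {T : completePseudoMetricType R} :
  separable T -> exists dd : nat -> T, forall (x : T) (e : R), 0 < e -> exists n, ball x e (dd n).
Proof.
move=> [D [/countable_injP[f f_inj] D_dense]].
exists (fun n => xget point (fun x => D x /\ f x = n)) => x e e0.
have [|d [xd Dd]] := D_dense (ball x e)° _ (open_interior _).
  by exists x; apply: nbhs_singleton; apply: nbhs_interior; exact: nbhsx_ballx.
exists (f d).
have [D_pick fd] := xgetPex point (ex_intro (fun y => D y /\ f y = f d) d (conj Dd erefl)).
by rewrite (f_inj _ _ _ _ fd) ?in_setE //; apply: interior_subset xd.
Qed.

Definition condensation_points {R : realType} (T : pseudoMetricType R) : set T :=
  [set x | forall e : R, 0 < e -> ~ countable (ball x e)].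

Lemma closed_condensation_points {R : realType} (T : pseudoMetricType R) :
  closed (condensation_points T).
Proof.
rewrite -openC openE => x /existsNP[e /not_implyP[e0 /contrapT xe]].
apply/nbhs_ballP; exists (e / 2) => /=; first lra.
move=> y xy; have yx : ball y (e / 2) `<=` ball x e.
  by move=> z yz; apply: (@le_ball _ _ _ (e / 2 + e / 2)); [lra | apply: ball_triangle xy yz].
move=> /(_ (e / 2) ltac:(lra)); apply; exact: sub_countable (subset_card_le yx) xe.
Qed.

Section countable_base.
Context {R : realType} {T : completePseudoMetricType R}.
Variable dd : nat -> T.
Hypothesis dd_dense : forall (x : T) (e : R), 0 < e -> exists n, ball x e (dd n).

Definition basic_ball (nk : nat * nat) : set T := ball (dd nk.1) nk.2.+1%:R^-1.

Lemma basic_ball_base (x : T) {e : R} : 0 < e ->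
  exists nk, basic_ball nk x /\ basic_ball nk `<=` ball x e.
Proof.
move=> e0; have [k] := ltr_add_invr (ltac:(lra) : 0 < e / 2); rewrite add0r => ke.
have [n xn] := dd_dense x _ (ltac:(by rewrite invr_gt0 ltr0n) : 0 < k.+1%:R^-1).
exists (n, k); split=> [|z nz]; first exact: ball_sym.
apply: (le_ball _ (ball_triangle xn nz)).
by rewrite [leRHS](splitr e); apply/ltW/ltrD.
Qed.

Definition point_code (x : T) (nk : nat * nat) : bool := `[< basic_ball nk x >].

Lemma point_code_inj : hausdorff_space T -> injective point_code.
Proof.
move=> T_hausdorff x y xy; apply: contrapT => /eqP neq_xy.
have [[ra rb] /= /eqP sep] : exists r : {posnum R} * {posnum R},
    ball x r.1%:num `&` ball y r.2%:num == set0.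
  by move: T_hausdorff; rewrite ball_hausdorff; apply.
have [nk [x_nk nk_x]] := basic_ball_base x (gt0 ra).
have /asboolP /nk_x xy_ra : point_code y nk by rewrite -xy; apply/asboolP.
suff : set0 y by []; rewrite -sep; split => //; exact: ballxx.
Qed.

Definition closed_code (A : set T) (nk : nat * nat) : bool := `[< basic_ball nk `&` A !=set0 >].

(* A closed set is the set of points all of whose basic neighbourhoods meet it. *)
Lemma closed_code_inj {A B : set T} :
  closed A -> closed B -> closed_code A = closed_code B -> A = B.
Proof.
suff sub (C D : set T) : closed D -> closed_code C = closed_code D -> C `<=` D.
  by move=> cA cB AB; apply/seteqP; split; apply: sub.
move=> cD CD x Cx; apply: contrapT => nDx.
have /nbhs_ballP [r /= r0 rD] : nbhs x (~` D).
  by apply: open_nbhs_nbhs; split => //; exact: closed_openC.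
have [nk [x_nk nk_x]] := basic_ball_base x r0.
have : closed_code C nk by apply/asboolP; exists x.
by rewrite CD => /asboolP [z [/nk_x/rD]].
Qed.

Lemma countable_not_condensation : countable (~` condensation_points T).
Proof.
apply: (@sub_countable _ _ _ (\bigcup_(nk in [set nk | countable (basic_ball nk)]) basic_ball nk)).
  apply: subset_card_le => x /existsNP[e /not_implyP[e0 /contrapT xe]].
  have [nk [x_nk nk_x]] := basic_ball_base x e0.
  by exists nk => //=; apply: sub_countable (subset_card_le nk_x) xe.
exact: bigcup_countable.
Qed.

Lemma condensation_points_dense_in_itself :
  condensation_points T `<=` limit_point (condensation_points T).
Proof.
move=> x Kx U /nbhs_ballP [e /= e0 eU]; apply: contrapT => noK; apply: (Kx e e0).
have : countable ([set x] `|` ~` condensation_points T).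
  rewrite -bigcup2inE; apply: bigcup_countable; first exact/finite_set_countable/finite_II.
  by move=> [|[|i]] _ /=;
    [exact: countable1 | exact: countable_not_condensation | exact: countable0].
apply/sub_countable/subset_card_le => y xy; have [->|yx] := eqVneq y x; first by left.
by right => Ky; apply: noK; exists y; split => //; exact: eU.
Qed.

End countable_base.

Definition has_perfect_subset (T : topologicalType) : Prop :=
  exists P : set T, perfect_set P /\ P !=set0.

Lemma uncountable_perfect_subset {R : realType} {T : completePseudoMetricType R} :
  polish T -> ~ countable [set: T] -> has_perfect_subset T.
Proof.
move=> [_ /separable_dense_seq [dd dd_dense]] T_uncountable.
exists (condensation_points T); split; last first.
  apply/set0P/negP => /eqP K0; apply: T_uncountable.
  have := countable_not_condensation _ dd_dense; apply: sub_countable.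
  by apply: subset_card_le => x _; rewrite K0.
split; first exact: closed_condensation_points.
apply/seteqP; split; last exact: condensation_points_dense_in_itself _ dd_dense.
by move=> x /subset_limit_point/closed_condensation_points.
Qed.

Definition nonempty_perfect_set (T : topologicalType) := {P : set T | perfect_set P /\ P !=set0}.

Lemma nonempty_perfect_set_inj_realT {R : realType} {T : completePseudoMetricType R} :
  separable T -> exists enc : nonempty_perfect_set T -> R, injective enc.
Proof.
move=> T_separable; have [dd dd_dense] := separable_dense_seq T_separable.
have [h h_inj] := bool_fun_realT_inj R (nat * nat)%type.
exists (fun P => h (closed_code dd (proj1_sig P))) => -[P hP] [Q hQ] /h_inj.
move=> /(closed_code_inj _ dd_dense hP.1.1 hQ.1.1) /= PQ; subst Q.
by congr exist; apply: Prop_irrelevance.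
Qed.

(* List the nonempty perfect sets in type c and put, at each step, one fresh
   point of the current set into F and another one out of F. *)
Lemma bernstein_partition {R : realType} {Y : completePseudoMetricType R} :
  continuum_regular R -> polish Y -> exists F : set Y, bernstein F /\ bernstein (~` F).
Proof.
move=> continuum_reg [Y_hausdorff Y_separable].
have [enc enc_inj] := nonempty_perfect_set_inj_realT Y_separable.
pose used (S : set (Y * Y)) := fst @` S `|` snd @` S.
pose good (P : nonempty_perfect_set Y) (S : set (Y * Y)) (o : Y * Y) :=
  [/\ (proj1_sig P `\` used S) o.1, (proj1_sig P `\` used S) o.2 & o.1 <> o.2].
have [|g [prec [prec_total g_good]]] := transfinite_construction enc good enc_inj.
  move=> [P [P_perfect P0]] S sS _.
  have s_used : card_lt_c R (used S) by apply: small_setU => //; apply: small_image.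
  have P_big := perfect_set_notsmall Y_hausdorff P_perfect P0.
  by have [p [q [Pp Pq pq]]] := notsmall_setD_two continuum_reg P_big s_used; exists (p, q).
pose F := [set y | exists t, (g t).1 = y].
have notF t : ~ F (g t).2.
  move=> [s gst]; have [st|st] := pselect (s = t).
    by move: gst; rewrite st; have [_ _] := g_good t.
  have [prec_st|prec_ts] := prec_total s t st.
    have [_ [_ fresh_t2] _] := g_good t.
    by apply: fresh_t2; left; exists (g s) => //; exists s.
  have [[_ fresh_s1] _ _] := g_good s.
  by apply: fresh_s1; right; rewrite gst; exists (g t) => //; exists t.
exists F; split=> P P_perfect P0;
  pose t : nonempty_perfect_set Y := exist _ P (conj P_perfect P0);
  have [[Pg1 _] [Pg2 _] _] := g_good t.
  split; first by exists (g t).1; split => //; exists t.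
  by exists (g t).2; split => //; exact: notF.
split; first by exists (g t).2; split => //; exact: notF.
by exists (g t).1; rewrite setCK; split => //; exists t.
Qed.

Section realizing_set.
Context {R : realType} {X Y : completePseudoMetricType R} {Ys : Y -> completePseudoMetricType R}.
Variable f : forall a : Y, X -> Ys a.
Hypothesis continuum_reg : continuum_regular R.
Hypothesis Ys_hausdorff : forall a : Y, hausdorff_space (Ys a).
Hypothesis fibre_c : forall (a : Y) (y : Ys a), card_is_c R (f a @^-1` [set y]).
Hypothesis fibre_meet : forall a b : Y, a <> b -> forall (y : Ys a) (y' : Ys b),
  card_lt_c R (f a @^-1` [set y] `&` f b @^-1` [set y']).
Variable F : set Y.

(* [Hit a y] asks for a point of A in the fibre of [y] (for [a] in F); [Split a P]
   asks for a value of [f a] on A in [P] and a value in [P] kept out of [f a @` A]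
   (for [a] outside F). *)
Inductive requirement := Hit (a : Y) of Ys a | Split (a : Y) of set (Ys a).

Definition admissible (t : requirement) : Prop :=
  match t with
  | Hit a _ => F a
  | Split a P => ~ F a /\ perfect_set P /\ P !=set0
  end.

Definition task := {t : requirement | admissible t}.

(* A step contributes its first component to A and possibly forbids a value
   [z] to [f a], recorded as [Some (existT _ a z)]. *)
Definition step := (X * option {a : Y & Ys a})%type.

Definition forbidden (S : set step) : set {a : Y & Ys a} :=
  [set p | exists2 o, S o & o.2 = Some p].

Definition good (t : task) (S : set step) (o : step) : Prop :=
  match proj1_sig t with
  | Hit a y => [/\ f a o.1 = y, o.2 = None &
      forall p, forbidden S p -> projT1 p <> a -> f (projT1 p) o.1 <> projT2 p]
  | Split a P => exists z, [/\ o.2 = Some (existT _ a z), P z, P (f a o.1) /\ f a o.1 <> z,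
      forall p, forbidden S p -> f (projT1 p) o.1 <> projT2 p &
      ~ (f a @` (fst @` S)) z]
  end.

Lemma forbidden_card_le (S : set step) : forbidden S #<= S.
Proof.
pose forbidden_of (o : step) := odflt (@existT Y (fun a => Ys a) point point) o.2.
have sub_image : forbidden S `<=` forbidden_of @` S.
  by move=> p [u uS up]; exists u => //; rewrite /forbidden_of up.
exact: card_le_trans (subset_card_le sub_image) (card_image_le forbidden_of S).
Qed.

Lemma fibre_point_avoiding {S : set step} {a : Y} (y : Ys a) :
  card_lt_c R S -> S #<= [set: R] -> exists x, f a x = y /\
    forall p, forbidden S p -> projT1 p <> a -> f (projT1 p) x <> projT2 p.
Proof.
move=> sS SR; pose meet (p : {a : Y & Ys a}) : set X :=
  if pselect (projT1 p = a) then set0 else f (projT1 p) @^-1` [set projT2 p] `&` f a @^-1` [set y].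
have small_meet p : forbidden S p -> card_lt_c R (meet p).
  move=> _; rewrite /meet; case: pselect => pa; first exact/countable_small/countable0.
  exact: fibre_meet.
have small_meets : card_lt_c R (\bigcup_(p in forbidden S) meet p).
  exact: (small_bigcup continuum_reg (card_le_trans (forbidden_card_le S) SR)
    (small_card_le (forbidden_card_le S) sS) small_meet).
have fibre_big := card_is_c_notsmall (fibre_c a y).
have [x [fx x_meets]] := notsmall_nonempty (notsmall_setD continuum_reg fibre_big small_meets).
exists x; split => // p Sp pa fxp; apply: x_meets; exists p => //.
by rewrite /meet; case: pselect.
Qed.

Lemma good_exists (t : task) (S : set step) :
  card_lt_c R S -> S #<= [set: R] -> exists o, good t S o.
Proof.
move=> sS SR; rewrite /good; case: t => -[a y|a P] /= adm.
  by have [x [fx x_avoids]] := fibre_point_avoiding y sS SR; exists (x, None).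
have [_ [P_perfect P0]] := adm.
have P_big := perfect_set_notsmall (Ys_hausdorff a) P_perfect P0.
have [z [Pz z_fresh]] := notsmall_nonempty (notsmall_setD continuum_reg P_big
  (small_image (f a) (small_image fst sS))).
pose Za := [set w : Ys a | forbidden S (existT _ a w)] `|` [set z].
have small_Za : card_lt_c R Za.
  have a_forbidden : [set w : Ys a | forbidden S (existT _ a w)] #<= forbidden S.
    apply: (@card_le_inj _ _ _ _ (fun w : Ys a => existT _ a w)) => [w w' _ _|].
      exact: eq_from_Tagged.
    by move=> _ [w ? <-].
  have small_forbidden := small_card_le (forbidden_card_le S) sS.
  exact: (small_setU continuum_reg (small_card_le a_forbidden small_forbidden)
    (countable_small (countable1 z))).
have [y [Py /not_orP[y_free yz]]] := notsmall_nonempty (notsmall_setD continuum_reg P_big small_Za).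
have [x [fx x_avoids]] := fibre_point_avoiding y sS SR.
exists (x, Some (existT _ a z)), z; rewrite /= fx; split => // -[b w] Sbw /= fbw.
have [ba|ba] := pselect (b = a); last exact: x_avoids Sbw ba fbw.
by subst b; apply: y_free; rewrite -fx fbw.
Qed.

Lemma task_inj_realT : polish Y -> (forall a, separable (Ys a)) ->
  exists enc : task -> R, injective enc.
Proof.
move=> [Y_hausdorff Y_separable] Ys_separable.
have [ddY ddY_dense] := separable_dense_seq Y_separable.
pose dds a := proj1_sig (cid (separable_dense_seq (Ys_separable a))).
have dds_dense a := proj2_sig (cid (separable_dense_seq (Ys_separable a))).
pose code (t : requirement) (i : nat * (nat * nat)) : bool :=
  match t, i.1 with
  | Hit _ _, 0 => true
  | Hit a _, 1 | Split a _, 1 => point_code ddY a i.2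
  | Hit a y, 2 => point_code (dds a) y i.2
  | Split a P, 2 => closed_code (dds a) P i.2
  | _, _ => false
  end.
have [h h_inj] := bool_fun_realT_inj R (nat * (nat * nat))%type.
exists (fun t => h (code (proj1_sig t))) => -[t1 adm1] [t2 adm2] /h_inj /= c12.
have c i nk : code t1 (i, nk) = code t2 (i, nk) by rewrite c12.
suff t12 : t1 = t2 by subst t2; congr exist; exact: Prop_irrelevance.
have same_a a1 a2 : (forall nk, point_code ddY a1 nk = point_code ddY a2 nk) -> a1 = a2.
  by move=> a12; apply: (point_code_inj _ ddY_dense Y_hausdorff); apply/funext.
case: t1 t2 adm1 adm2 c {c12} => [a1 y1|a1 P1] [a2 y2|a2 P2] adm1 adm2 c;
  try by have := c 0%N (0, 0)%N.
  have a12 := same_a a1 a2 (c 1%N); subst a2; congr Hit.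
  apply: (point_code_inj _ (dds_dense a1) (Ys_hausdorff a1)).
  by apply/funext => nk; exact: c 2%N nk.
have a12 := same_a a1 a2 (c 1%N); subst a2; congr Split.
apply: (closed_code_inj _ (dds_dense a1) adm1.2.1.1 adm2.2.1.1).
by apply/funext => nk; exact: c 2%N nk.
Qed.

Section from_recursion.
Variables (g : task -> step) (prec : task -> task -> Prop).
Hypothesis prec_total : forall s t, s <> t -> prec s t \/ prec t s.
Hypothesis g_good : forall t, good t (g @` [set s | prec s t]) (g t).

Let A := range (fun t => (g t).1).

Lemma image_realization_onto a : F a -> f a @` A = [set: Ys a].
Proof.
move=> Fa; apply/seteqP; split => // y _; pose t : task := exist _ (Hit a y) Fa.
by have [fy _ _] := g_good t; exists (g t).1 => //; exists t.
Qed.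

(* The value [z] reserved by a [Split] task [t] is never taken: earlier points
   were chosen before [z] (which was fresh), later ones avoid it, and [g t] itself
   maps to [f a (g t).1 <> z]. *)
Lemma image_realization_bernstein a : ~ F a -> bernstein (f a @` A).
Proof.
move=> nFa P P_perfect P0; pose t : task := exist _ (Split a P) (conj nFa (conj P_perfect P0)).
have [z [gt2 Pz [Pfx fxz] _ z_fresh]] := g_good t.
split; first by exists (f a (g t).1); split => //; exists (g t).1 => //; exists t.
exists z; split => // -[_ [s _ <-] fsz].
have [st|st] := pselect (s = t); first by apply: fxz; rewrite -st.
have [prec_st|prec_ts] := prec_total s t st.
  by apply: z_fresh; exists (g s).1 => //; exists (g s) => //; exists s.
have z_forbidden : forbidden (g @` [set u | prec u s]) (existT _ a z).
  by exists (g t) => //; exists t.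
move: (g_good s); rewrite /good.
case: s {st} prec_ts fsz z_forbidden => -[b y|b Q] adm /= _ fsz z_forbidden.
  by case=> _ _ /(_ _ z_forbidden) /=; apply => // ab; apply: (nFa); rewrite ab.
by case=> w [_ _ _ /(_ _ z_forbidden)].
Qed.

End from_recursion.

Lemma realizing_set_exists : polish Y -> (forall a, separable (Ys a)) ->
  exists A : set X, (forall a, F a -> f a @` A = [set: Ys a]) /\
                    (forall a, ~ F a -> bernstein (f a @` A)).
Proof.
move=> Y_polish Ys_separable; have [enc enc_inj] := task_inj_realT Y_polish Ys_separable.
have [g [prec [prec_total g_good]]] := transfinite_construction enc good enc_inj good_exists.
exists (range (fun t => (g t).1)); split => a.
  exact: image_realization_onto.
exact: image_realization_bernstein prec_total g_good a.
Qed.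

End realizing_set.

Lemma bernstein_neqT {Z : topologicalType} {S : set Z} :
  has_perfect_subset Z -> bernstein S -> S <> [set: Z].
Proof.
by move=> [P [P_perfect P0]] /(_ P P_perfect P0) [_ [z [nSz _]]] ST; apply: nSz; rewrite ST.
Qed.

Lemma no_perfect_bernstein {Z : topologicalType} (S : set Z) :
  ~ has_perfect_subset Z -> bernstein S.
Proof. by move=> noP P P_perfect P0; exfalso; apply: noP; exists P. Qed.

Lemma realization_classes {X Y : Type} {Ys : Y -> topologicalType}
    (f : forall a : Y, X -> Ys a) {A : set X} {F : set Y} :
  (forall a, has_perfect_subset (Ys a)) ->
  (forall a, F a -> f a @` A = [set: Ys a]) -> (forall a, ~ F a -> bernstein (f a @` A)) ->
  F = [set a | f a @` A = [set: Ys a]] /\ ~` F = [set a | bernstein (f a @` A)].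
Proof.
move=> Ys_perfect A_onto A_bernstein; split; apply/seteqP; split => a /=.
- exact: A_onto.
- by move=> fA; apply: contrapT => /A_bernstein/(bernstein_neqT (Ys_perfect a)).
- exact: A_bernstein.
- by move=> /(bernstein_neqT (Ys_perfect a)) + Fa; apply; exact: A_onto.
Qed.

Lemma subsingleton_no_perfect {Z : topologicalType} :
  (forall x y : Z, x = y) -> ~ has_perfect_subset Z.
Proof.
move=> Z1 [P [[_ P_lim] [p Pp]]]; have : limit_point P p by rewrite P_lim.
by move=> /(_ setT filterT) [y [yp _ _]]; move: yp; rewrite (Z1 y p) eqxx.
Qed.

(* The fibre of a point of [Ys b] is the union, over the points of [Ys a], of
   its small intersections with the fibres of [f a]. *)
Lemma fibres_codomain_uncountable {R : realType} {X Y : Type} {Ys : Y -> pointedType}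
    (f : forall a : Y, X -> Ys a) :
  continuum_regular R ->
  (forall (a : Y) (y : Ys a), card_is_c R (f a @^-1` [set y])) ->
  (forall a b : Y, a <> b -> forall (y : Ys a) (y' : Ys b),
     card_lt_c R (f a @^-1` [set y] `&` f b @^-1` [set y'])) ->
  forall a b : Y, a <> b -> ~ countable [set: Ys a].
Proof.
move=> continuum_reg fibre_c fibre_meet a b ab Ya_countable.
apply: (card_is_c_notsmall (fibre_c b point)).
have -> : f b @^-1` [set point] =
    \bigcup_(y in [set: Ys a]) (f a @^-1` [set y] `&` f b @^-1` [set point]).
  by apply/seteqP; split => [x fx|x [y _ [_ fx]]]; first by exists (f a x).
exact: (small_bigcup continuum_reg (countable_card_le_realT Ya_countable)
  (countable_small Ya_countable) (fun y _ => fibre_meet a b ab y point)).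
Qed.

Theorem mainTheorem8 (R : realType) (X Y : completePseudoMetricType R)
  (Ys : Y -> completePseudoMetricType R) (f : forall a : Y, X -> Ys a) :
  continuum_regular R ->
  polish X -> polish Y -> (forall a : Y, polish (Ys a)) ->
  (forall (a : Y) (y : Ys a), card_is_c R (f a @^-1` [set y])) ->
  (forall (a b : Y), a <> b -> forall (y : Ys a) (y' : Ys b),
     card_lt_c R (f a @^-1` [set y] `&` f b @^-1` [set y'])) ->
  exists (A : set X) (F G : set Y),
    bernstein F /\ bernstein G /\ F `&` G = set0 /\ F `|` G = [set: Y] /\
    F = [set a | f a @` A = [set: Ys a]] /\
    G = [set a | bernstein (f a @` A)].
Proof.
move=> continuum_reg _ Y_polish Ys_polish fibre_c fibre_meet.
have [Ys_perfect|/existsNP[a0 no_perfect_a0]] := pselect (forall a, has_perfect_subset (Ys a)).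
  have [F [F_bernstein CF_bernstein]] := bernstein_partition continuum_reg Y_polish.
  have [A [A_onto A_bernstein]] := realizing_set_exists f continuum_reg
    (fun a => (Ys_polish a).1) fibre_c fibre_meet F Y_polish (fun a => (Ys_polish a).2).
  have [FE CFE] := realization_classes f Ys_perfect A_onto A_bernstein.
  by exists A, F, (~` F); do 2!split => //; split; [exact: setICr | split; [exact: setUCr |]].
have Y_a0 b : b = a0.
  apply: contrapT => ba0; apply/no_perfect_a0/uncountable_perfect_subset => //.
  exact: fibres_codomain_uncountable continuum_reg fibre_c fibre_meet a0 b (nesym ba0).
have no_perfect_Y := subsingleton_no_perfect (fun x y => etrans (Y_a0 x) (esym (Y_a0 y))).
exists set0, set0, setT; do ![split; first exact: no_perfect_bernstein].
split; first exact: set0I. split; first exact: set0U.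
split; apply/seteqP; split => a //=.
  by rewrite image_set0 => /esym/eqP; rewrite (negbTE setT0).
by move=> _; rewrite (Y_a0 a); exact: no_perfect_bernstein.
Qed.
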